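(* Let $K:X\times X\to\mathbb{C}$ be positive definite and assume that the matrix $K_F=(K(y,z))_{y,z\in F}$ is invertible for every finite $F\subset X$. Let $x\in X$. Then $\delta_x\in\mathscr{H}(K)$ if and only if $\sup\{(K_F^{-1})_{x,x}: F\subset X\text{ finite},\ x\in F\}<\infty$, and in that case $\|\delta_x\|^2_{\mathscr{H}(K)}$ equals this supremum.
   Context: $\delta_x$ is the function on $X$ equal to $1$ at $x$ and $0$ elsewhere; $\mathscr{H}(K)$ is the reproducing kernel Hilbert space of $K$ (completion of span of $K(\cdot,x)$ with $\langle K(\cdot,x),K(\cdot,y)\rangle=K(x,y)$, reproducing property $\langle K(\cdot,x),h\rangle=h(x)$). *)

From mathcomp Require Import all_boot all_algebra.
From mathcomp Require Import boolp reals complex.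
Set Implicit Arguments. Unset Strict Implicit. Unset Printing Implicit Defensive.
Import GRing.Theory Num.Theory.
Local Open Scope ring_scope.
Local Open Scope complex_scope.

Section RKHS.
Variables (R : realType) (X : Type).

(* A finite linear combination  h = sum_i c_i K(.,x_i),  given by the list of
   pairs (x_i, c_i). *)
Definition comb := seq (X * R[i]).

Definition ceval (K : X -> X -> R[i]) (s : comb) (y : X) : R[i] :=
  \sum_(a <- s) a.2 * K y a.1.

(* squared norm  <h,h> = sum_{i,j} conj(c_i) c_j K(x_i,x_j),
   from <K(.,x),K(.,y)> = K(x,y) (inner product antilinear in the 1st slot) *)
Definition cnorm2 (K : X -> X -> R[i]) (s : comb) : R[i] :=
  \sum_(a <- s) \sum_(b <- s) (a.2)^* * b.2 * K a.1 b.1.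

Definition csub (s t : comb) : comb := s ++ [seq (b.1, - b.2) | b <- t].

Definition posdef (K : X -> X -> R[i]) : Prop := forall s : comb, 0 <= cnorm2 K s.

(* u is a Cauchy sequence in span{K(.,x)} (for the H(K)-norm) converging
   pointwise to f; the elements of the completion H(K) are realized as such
   pointwise limits. *)
Definition approximates (K : X -> X -> R[i]) (u : nat -> comb) (f : X -> R[i]) : Prop :=
  (forall e : R[i], 0 < e -> exists N : nat, forall m n : nat,
      (N <= m)%N -> (N <= n)%N -> `|cnorm2 K (csub (u m) (u n))| < e) /\
  (forall (y : X) (e : R[i]), 0 < e -> exists N : nat, forall n : nat,
      (N <= n)%N -> `|ceval K (u n) y - f y| < e).

Definition in_RKHS (K : X -> X -> R[i]) (f : X -> R[i]) : Prop :=
  exists u, approximates K u f.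

Definition RKHS_norm2 (K : X -> X -> R[i]) (f : X -> R[i]) (r : R[i]) : Prop :=
  exists u, approximates K u f /\
    (forall e : R[i], 0 < e -> exists N : nat, forall n : nat,
        (N <= n)%N -> `|cnorm2 K (u n) - r| < e).

Definition delta (x : X) : X -> R[i] := fun y => if `[< y = x >] then 1 else 0.

(* K_F for a finite F = image of the injective f : 'I_n -> X *)
Definition KF (K : X -> X -> R[i]) (n : nat) (f : 'I_n -> X) : 'M[R[i]]_n :=
  \matrix_(i, j) K (f i) (f j).

Definition Fvals (K : X -> X -> R[i]) (x : X) (z : R[i]) : Prop :=
  exists (n : nat) (f : 'I_n -> X) (i : 'I_n),
    injective f /\ f i = x /\ z = (invmx (KF K f)) i i.

Definition is_lub (S : R[i] -> Prop) (r : R[i]) : Prop :=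
  (forall z, S z -> z <= r) /\ (forall M, (forall z, S z -> z <= M) -> r <= M).

End RKHS.

(* For a finite F containing x, the element h_F of span {K(., y) : y in F} that agrees
   with delta_x on F has as coefficients the column of K_F^-1 at x, and
   ||h_F||^2 = (K_F^-1)_{x,x}.  Every g agreeing with delta_x on F satisfies
   <h_F, g> = <h_F, h_F>, whence ||g - h_F||^2 = ||g||^2 - ||h_F||^2.
   If u_n tends to delta_x in H(K), then <h_F, u_n> -> ||h_F||^2, and Cauchy-Schwarz
   gives ||h_F||^2 <= lim ||u_n||^2.  Conversely, if F contains the points of u_n then
   <u_n, h_F> = <u_n, delta_x>, which is close to ||u_n||^2, so Cauchy-Schwarz bounds
   lim ||u_n||^2 by any bound on the ||h_F||^2.  When these values are bounded, the
   interpolants on nested finite sets whose norms approach the supremum s form a Cauchy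
   sequence by the Pythagoras identity, and they converge pointwise to delta_x because
   |h_F(y) - delta_x(y)|^2 <= (s - ||h_F||^2) K(y, y). *)

From Pilot Require Import Defs.
From mathcomp Require Import all_boot all_order all_algebra.
From mathcomp Require Import boolp classical_sets reals complex.
From mathcomp Require Import ring lra.
Set Implicit Arguments. Unset Strict Implicit. Unset Printing Implicit Defensive.
Import Order.TTheory GRing.Theory Num.Theory Normc.
Local Open Scope ring_scope.
Local Open Scope complex_scope.

Lemma invSn_lt_eventually (R : archiRealFieldType) (e : R) :
  0 < e -> exists N, forall n, (N <= n)%N -> n.+1%:R^-1 < e.
Proof.
move=> e0; have /archi_boundP : 0 <= e^-1 by rewrite invr_ge0 ltW.
set N := Num.bound _ => ltN; exists N => n leNn.
rewrite -[e]invrK ltf_pV2 ?posrE ?invr_gt0 ?ltr0Sn //.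
by apply: (lt_le_trans ltN); rewrite ler_nat ltnW.
Qed.

Lemma le_of_le_sqrt_eps (R : rcfType) (rho M : R) : 0 <= M ->
  (forall e, 0 < e -> rho <= Num.sqrt ((rho + e) * M) + e) -> rho <= M.
Proof.
move=> M0 H; rewrite leNgt; apply/negP => ltMr.
have r0 : 0 < rho by apply: le_lt_trans ltMr.
have sq e : 0 < e -> e <= rho -> rho * (rho - M) <= e * (2 * rho + M).
  move=> e0 le_er; have := H e e0; rewrite -lerBlDr => le_sqrt.
  have : (rho - e) ^+ 2 <= (rho + e) * M.
    rewrite -[_ * M]sqr_sqrtr ?mulr_ge0 ?addr_ge0 ?(ltW r0) ?(ltW e0) //.
    by rewrite ler_sqr // nnegrE ?subr_ge0 ?sqrtr_ge0.
  nra.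
pose e := rho * (rho - M) / (2 * (2 * rho + M)).
have D0 : 0 < 2 * (2 * rho + M) by nra.
have e0 : 0 < e by rewrite divr_gt0 // mulr_gt0 // subr_gt0.
have le_er : e <= rho by rewrite ler_pdivrMr //; nra.
have := sq e e0 le_er.
have -> : e * (2 * rho + M) = rho * (rho - M) / 2 by rewrite /e; field; nra.
have : 0 < rho * (rho - M) by rewrite mulr_gt0 // subr_gt0.
lra.
Qed.

Lemma le_mul_of_quadratic_ge0 (R : realFieldType) (P Q n : R) :
  0 <= P -> 0 <= Q -> 0 <= n ->
  (forall l, 0 <= P - 2 * l * n + l ^+ 2 * n * Q) -> n <= P * Q.
Proof.
move=> P0 Q0 n0 H; have [Q_0|Qn0] := eqVneq Q 0.
  subst Q; rewrite mulr0; have [->|nn0] := eqVneq n 0; first by [].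
  have := H ((P + 1) / (2 * n)).
  have -> : P - 2 * ((P + 1) / (2 * n)) * n + ((P + 1) / (2 * n)) ^+ 2 * n * 0 = -1.
    by field.
  by rewrite ler0N1.
have := H Q^-1.
have -> : P - 2 * Q^-1 * n + Q^-1 ^+ 2 * n * Q = (P * Q - n) / Q by field.
by rewrite pmulr_lge0 ?invr_gt0 ?lt0r ?Qn0 // subr_ge0.
Qed.

Section ComplexModulus.
Variable R : rcfType.
Implicit Types (w : R[i]) (a : R).

Lemma normc_ge0 w : 0 <= normc w.
Proof. by case: w => a b; apply: sqrtr_ge0. Qed.

Lemma normr_normc w : `|w| = (normc w)%:C.
Proof. by rewrite normc_def; case: w. Qed.

Lemma normc_real a : normc a%:C = `|a|.
Proof. by rewrite /= expr0n addr0 sqrtr_sqr. Qed.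

Lemma normc_sqr w : normc w ^+ 2 = complex.Re w ^+ 2 + complex.Im w ^+ 2.
Proof. by case: w => a b; rewrite sqr_sqrtr // addr_ge0 ?sqr_ge0. Qed.

Lemma Re_le_normc w : `|complex.Re w| <= normc w.
Proof. by case: w => a b; rewrite -sqrtr_sqr ler_wsqrtr // lerDl sqr_ge0. Qed.

Lemma Im_le_normc w : `|complex.Im w| <= normc w.
Proof. by case: w => a b; rewrite -sqrtr_sqr ler_wsqrtr // lerDr sqr_ge0. Qed.

Lemma gtc0_real w : 0 < w -> w = (complex.Re w)%:C /\ 0 < complex.Re w.
Proof. by case: w => a b; rewrite ltcE /= => /andP[/eqP -> ->]. Qed.

End ComplexModulus.

Section Convergence.
Variable R : rcfType.

Definition cvgR (u : nat -> R) (l : R) :=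
  forall e, 0 < e -> exists N, forall n, (N <= n)%N -> `|u n - l| < e.

Definition cvgC (u : nat -> R[i]) (l : R[i]) :=
  forall e : R, 0 < e -> exists N, forall n, (N <= n)%N -> normc (u n - l) < e.

Lemma cvgCP u l : cvgC u l <->
  forall e : R[i], 0 < e -> exists N, forall n, (N <= n)%N -> `|u n - l| < e.
Proof.
split=> [cv e /gtc0_real[-> e0] | cv e e0].
  by have [N HN] := cv _ e0; exists N => n /HN; rewrite normr_normc ltcR.
have /cv[N HN] : 0 < e%:C by rewrite ltcR.
by exists N => n /HN; rewrite normr_normc ltcR.
Qed.

Lemma cvgC_realP (a : nat -> R) r :
  cvgC (fun n => (a n)%:C) r <-> r = (complex.Re r)%:C /\ cvgR a (complex.Re r).
Proof.
split=> [cv | [-> cv] e /cv[N HN]]; last first.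
  by exists N => n /HN; rewrite -rmorphB normc_real.
have Im0 : complex.Im r = 0.
  apply/eqP; rewrite -normr_le0; apply/ler_addgt0Pr => e /cv[N HN].
  rewrite add0r; apply/ltW/(le_lt_trans _ (HN N (leqnn N))).
  by apply: le_trans (Im_le_normc _); rewrite raddfB /= sub0r normrN.
split; first by case: r Im0 {cv} => a0 b /= ->.
move=> e /cv[N HN]; exists N => n /HN; apply: le_lt_trans.
by apply: le_trans (Re_le_normc _); rewrite raddfB.
Qed.

Lemma cvgCD u v l m : cvgC u l -> cvgC v m -> cvgC (fun n => u n + v n) (l + m).
Proof.
move=> cu cv e e0; have e2 : 0 < e / 2 by rewrite divr_gt0.
have [[N1 H1] [N2 H2]] := (cu _ e2, cv _ e2).
exists (maxn N1 N2) => n; rewrite geq_max => /andP[/H1 lt1 /H2 lt2].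
have -> : u n + v n - (l + m) = (u n - l) + (v n - m) by ring.
by apply: (le_lt_trans (le_normcD _ _)); lra.
Qed.

Lemma cvgCZ c u l : cvgC u l -> cvgC (fun n => c * u n) (c * l).
Proof.
move=> cu e e0; have c0 : 0 < normc c + 1 by rewrite ltr_wpDl ?normc_ge0.
have [N HN] := cu _ (divr_gt0 e0 c0).
exists N => n /HN lt_n; rewrite -mulrBr normcM.
apply: (le_lt_trans (ler_wpM2l (normc_ge0 c) (ltW lt_n))).
rewrite mulrA ltr_pdivrMr //; have := normc_ge0 c; nra.
Qed.

Lemma cvgC_sum (I : Type) (r : seq I) (F : I -> nat -> R[i]) (l : I -> R[i]) :
  (forall i, cvgC (F i) (l i)) ->
  cvgC (fun n => \sum_(i <- r) F i n) (\sum_(i <- r) l i).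
Proof.
move=> cF; elim: r => [|i r IH].
  by move=> e e0; exists 0%N => n _; rewrite !big_nil subrr normc0.
under eq_fun do rewrite big_cons.
by rewrite big_cons; apply: cvgCD.
Qed.

Lemma cvgC_normc_le u l b :
  cvgC u l -> (exists N, forall n, (N <= n)%N -> normc (u n) <= b) -> normc l <= b.
Proof.
move=> cu [N bN]; apply/ler_addgt0Pr => e /cu[M HM].
pose n := maxn N M.
have -> : l = u n - (u n - l) by ring.
apply: (le_trans (le_normcD _ _)); rewrite normcN.
by apply: lerD; [apply: bN; rewrite leq_maxl | apply/ltW/HM; rewrite leq_maxr].
Qed.

End Convergence.

Section Sesquilinear.
Variables (R : realType) (X : Type) (K : X -> X -> R[i]).
Implicit Types (s t : comb R X) (c : R[i]).

Definition cdot s t : R[i] := \sum_(a <- s) \sum_(b <- t) a.2^* * b.2 * K a.1 b.1.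

Definition cscale c t : comb R X := [seq (b.1, c * b.2) | b <- t].

Lemma cdot_catl s1 s2 t : cdot (s1 ++ s2) t = cdot s1 t + cdot s2 t.
Proof. by rewrite /cdot big_cat. Qed.

Lemma cdot_catr s t1 t2 : cdot s (t1 ++ t2) = cdot s t1 + cdot s t2.
Proof. by rewrite /cdot -big_split; apply: eq_bigr => a _; rewrite big_cat. Qed.

Lemma cdotZl c s t : cdot (cscale c s) t = c^* * cdot s t.
Proof.
rewrite /cdot big_map mulr_sumr; apply: eq_bigr => a _.
by rewrite mulr_sumr; apply: eq_bigr => b _ /=; rewrite rmorphM /=; ring.
Qed.

Lemma cdotZr c s t : cdot s (cscale c t) = c * cdot s t.
Proof.
rewrite /cdot mulr_sumr; apply: eq_bigr => a _.
by rewrite big_map mulr_sumr; apply: eq_bigr => b _ /=; ring.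
Qed.

Lemma csubE s t : csub s t = s ++ cscale (-1) t.
Proof. by congr (_ ++ _); apply: eq_map => b; rewrite mulN1r. Qed.

Lemma cdotBl s1 s2 t : cdot (csub s1 s2) t = cdot s1 t - cdot s2 t.
Proof. by rewrite csubE cdot_catl cdotZl rmorphN1 mulN1r. Qed.

Lemma cdotBr s t1 t2 : cdot s (csub t1 t2) = cdot s t1 - cdot s t2.
Proof. by rewrite csubE cdot_catr cdotZr mulN1r. Qed.

Lemma cdot_cevalr s t : cdot s t = \sum_(a <- s) a.2^* * ceval K t a.1.
Proof.
apply: eq_bigr => a _; rewrite /ceval mulr_sumr.
by apply: eq_bigr => b _; rewrite mulrA.
Qed.

Lemma ceval_csub s t y : ceval K (csub s t) y = ceval K s y - ceval K t y.
Proof.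
rewrite /ceval big_cat big_map -sumrN; congr (_ + _).
by apply: eq_bigr => b _ /=; rewrite mulNr.
Qed.

Hypothesis pd : posdef K.

Lemma posdef_conj y z : K z y = (K y z)^*.
Proof.
have := pd [:: (y, 1)]; have := pd [:: (z, 1)].
have := pd [:: (y, 1); (z, 1)]; have := pd [:: (y, 1); (z, 'i)].
rewrite /cnorm2 !big_cons !big_nil /= !addr0.
case: (K y y) => a1 b1; case: (K z z) => a2 b2.
case: (K y z) => a3 b3; case: (K z y) => a4 b4.
rewrite !lecE /=; simpc; rewrite /=.
move=> /andP[/eqP e1 _] /andP[/eqP e2 _] /andP[/eqP e3 _] /andP[/eqP e4 _].
by congr (_ +i* _); lra.
Qed.

Lemma cdotC s t : cdot t s = (cdot s t)^*.
Proof.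
rewrite /cdot rmorph_sum exchange_big /=; apply: eq_bigr => a _.
rewrite rmorph_sum; apply: eq_bigr => b _.
by rewrite !rmorphM /= conjcK posdef_conj; ring.
Qed.

Definition qnorm s : R := complex.Re (cnorm2 K s).

Lemma cnorm2E s : cnorm2 K s = cdot s s.
Proof. by []. Qed.

Lemma cdot_real s : cdot s s = (qnorm s)%:C.
Proof.
have := pd s; rewrite /qnorm cnorm2E; case: (cdot s s) => a b.
by rewrite lecE /= => /andP[/eqP ->].
Qed.

Lemma qnorm_ge0 s : 0 <= qnorm s.
Proof. by have := pd s; rewrite cnorm2E cdot_real lecR. Qed.

Lemma cauchy_schwarz s t : normc (cdot s t) ^+ 2 <= qnorm s * qnorm t.
Proof.
apply: le_mul_of_quadratic_ge0; rewrite ?qnorm_ge0 ?sqr_ge0 // => l.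
have := pd (s ++ cscale (- (l%:C * (cdot s t)^*)) t).
rewrite cnorm2E !cdot_catl !cdot_catr cdotZl cdotZr cdotZl cdotZr (cdotC s t).
rewrite !cdot_real normc_sqr -!complexr0.
by case: (cdot s t) => a b /=; simpc; rewrite /= => /andP[_]; nra.
Qed.

Lemma normc_cdot_le s t : normc (cdot s t) <= Num.sqrt (qnorm s * qnorm t).
Proof.
by rewrite -[normc _]ger0_norm ?normc_ge0 // -sqrtr_sqr ler_wsqrtr // cauchy_schwarz.
Qed.

Lemma qnormB s t : (qnorm (csub s t))%:C = cdot s s - cdot s t - cdot t s + cdot t t.
Proof. by rewrite -cdot_real cdotBl !cdotBr; ring. Qed.

Lemma qnormBC s t : qnorm (csub s t) = qnorm (csub t s).
Proof. by apply: complexI; rewrite !qnormB; ring. Qed.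

Lemma qnorm_le_par s t : qnorm s <= 2 * qnorm t + 2 * qnorm (csub s t).
Proof.
have := qnorm_ge0 (csub (csub s t) t).
suff -> : qnorm (csub (csub s t) t) = 2 * qnorm t + 2 * qnorm (csub s t) - qnorm s.
  by rewrite subr_ge0.
apply: complexI; rewrite qnormB !cdotBl !cdotBr !rmorphB !rmorphD !rmorphM /=.
by rewrite rmorph_nat qnormB -!cdot_real; ring.
Qed.

Lemma normc_ceval_le s y :
  normc (ceval K s y) <= Num.sqrt (qnorm s * qnorm [:: (y, 1)]).
Proof.
rewrite mulrC; apply: le_trans (normc_cdot_le _ _).
by rewrite cdot_cevalr big_seq1 /= rmorph1 mul1r.
Qed.

Definition cauchy (u : nat -> comb R X) := forall e : R, 0 < e -> exists N,
  forall m n, (N <= m)%N -> (N <= n)%N -> qnorm (csub (u m) (u n)) < e.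

Lemma cauchy_bounded u : cauchy u ->
  exists N, forall n, (N <= n)%N -> qnorm (u n) <= 2 * qnorm (u N) + 2.
Proof.
move=> /(_ 1 ltr01)[N HN]; exists N => n le_Nn.
apply: (le_trans (qnorm_le_par _ (u N))).
by have := HN n N le_Nn (leqnn N); lra.
Qed.

Lemma approximatesP u f : approximates K u f <->
  cauchy u /\ forall y, cvgC (fun n => ceval K (u n) y) (f y).
Proof.
have normE m n : `|cnorm2 K (csub (u m) (u n))| = (qnorm (csub (u m) (u n)))%:C.
  by rewrite cnorm2E cdot_real normr_normc normc_real ger0_norm ?qnorm_ge0.
split=> [[cu pu] | [cu pu]]; split=> [e e0 | y]; try by apply/cvgCP; apply: pu.
- have /cu[N HN] : 0 < e%:C by rewrite ltcR.
  by exists N => m n /HN /[apply]; rewrite normE ltcR.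
- case/gtc0_real: e0 => -> /cu[N HN].
  by exists N => m n /HN /[apply]; rewrite normE ltcR.
Qed.

Lemma RKHS_norm2P f r : RKHS_norm2 K f r <-> exists u, [/\ approximates K u f,
  r = (complex.Re r)%:C & cvgR (fun n => qnorm (u n)) (complex.Re r)].
Proof.
have cnormE (u : nat -> comb R X) :
    (fun n => cnorm2 K (u n)) = (fun n => (qnorm (u n))%:C).
  by apply/funext => n; rewrite cnorm2E cdot_real.
split=> [[u [au /cvgCP cv]] | [u [au re cv]]]; exists u.
  by move: cv; rewrite cnormE => /cvgC_realP[].
by split=> //; apply/cvgCP; rewrite cnormE; apply/cvgC_realP.
Qed.

End Sesquilinear.

Lemma exists_injective_cover (X : eqType) (x : X) (s : seq X) :
  exists n (f : 'I_n -> X) i, [/\ injective f, f i = x & {subset s <= codom f}].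
Proof.
pose t := undup (x :: s); pose f (j : 'I_(size t)) := nth x t j.
have tf p : p \in x :: s -> exists j, f j = p.
  rewrite -mem_undup => tp; have lt_pt : (index p t < size t)%N by rewrite index_mem.
  by exists (Ordinal lt_pt); rewrite /f nth_index.
have [i fi] := tf x (mem_head _ _).
exists (size t), f, i; split=> // [j k /eqP | p sp].
  by rewrite (nth_uniq x (ltn_ord j) (ltn_ord k) (undup_uniq _)) => /eqP/val_inj.
have [j <-] : exists j, f j = p by apply: tf; rewrite inE sp orbT.
exact: codom_f.
Qed.

Section DeltaInterpolation.
Variables (R : realType) (X : eqType) (K : X -> X -> R[i]) (x : X).
Hypothesis pd : posdef K.
Hypothesis KF_unit : forall n (f : 'I_n -> X), injective f -> KF K f \in unitmx.

Local Notation q := (qnorm K).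
Local Notation delta := (delta R x).
Implicit Types (h g : comb R X) (s : seq X).

Definition interpolant n (f : 'I_n -> X) (i : 'I_n) : comb R X :=
  [seq (f j, invmx (KF K f) j i) | j <- enum 'I_n].

Definition is_interpolant h :=
  exists n (f : 'I_n -> X) i, [/\ injective f, f i = x & h = interpolant f i].

Definition points h : seq X := map fst h.

Definition interp_delta h s := {in s, forall p, ceval K h p = delta p}.

Definition pair_delta h : R[i] := \sum_(a <- h) a.2^* * delta a.1.

Lemma points_interpolant n (f : 'I_n -> X) i : points (interpolant f i) = codom f.
Proof. by rewrite /points -map_comp codomE. Qed.

Lemma delta_inj n (f : 'I_n -> X) i k :
  injective f -> f i = x -> delta (f k) = (k == i)%:R.
Proof.
move=> inj_f fi; rewrite /Defs.delta -fi.
case: eqVneq => [->|ne]; first by rewrite asboolT.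
by rewrite asboolF // => /inj_f/eqP; apply/negP.
Qed.

Lemma ceval_interpolant n (f : 'I_n -> X) i k :
  injective f -> ceval K (interpolant f i) (f k) = (k == i)%:R.
Proof.
move=> /KF_unit unit_f.
have : (KF K f *m invmx (KF K f)) k i = (1%:M : 'M_n) k i by rewrite mulmxV.
rewrite !mxE => <-; rewrite /ceval big_map big_enum /=.
by apply: eq_bigr => j _; rewrite mxE mulrC.
Qed.

Lemma interpolant_interp h : is_interpolant h -> interp_delta h (points h).
Proof.
move=> [n [f [i [inj_f fi ->]]]]; rewrite points_interpolant => _ /codomP[k ->].
by rewrite ceval_interpolant // (delta_inj k inj_f fi).
Qed.

Lemma cnorm2_interpolant n (f : 'I_n -> X) i :
  injective f -> cnorm2 K (interpolant f i) = invmx (KF K f) i i.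
Proof.
move=> inj_f; set h := interpolant f i.
have hh : cdot K h h = (invmx (KF K f) i i)^*.
  rewrite cdot_cevalr big_map big_enum /= (bigD1 i) //= ceval_interpolant // eqxx mulr1.
  by rewrite big1 ?addr0 // => j /negbTE ji; rewrite ceval_interpolant // ji mulr0.
by rewrite cnorm2E -[RHS]conjcK -hh cdot_real // conjc_real.
Qed.

Lemma Fvals_interpolantP z :
  Fvals K x z <-> exists h, is_interpolant h /\ z = (q h)%:C.
Proof.
split=> [[n [f [i [inj_f [fi ->]]]]] | [h [[n [f [i [inj_f fi ->]]]] ->]]].
  exists (interpolant f i); split; first by exists n, f, i.
  by rewrite -cnorm2_interpolant // cnorm2E cdot_real.
by exists n, f, i; rewrite -cnorm2_interpolant // cnorm2E cdot_real.
Qed.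

Lemma exists_interpolant s : exists h, is_interpolant h /\ {subset s <= points h}.
Proof.
have [n [f [i [inj_f fi sf]]]] := exists_injective_cover x s.
exists (interpolant f i); rewrite points_interpolant; split=> //.
by exists n, f, i.
Qed.

Lemma cdot_interp h g : interp_delta g (points h) -> cdot K h g = pair_delta h.
Proof.
move=> gh; rewrite cdot_cevalr; apply: eq_big_seq => a ah.
by rewrite gh // map_f.
Qed.

Lemma qnormB_interp h g : interp_delta h (points h) -> interp_delta g (points h) ->
  q (csub g h) = q g - q h.
Proof.
move=> hh gh; apply: complexI.
rewrite qnormB // (cdotC pd h g) (cdot_interp gh) -(cdot_interp hh) !cdot_real //.
by rewrite conjc_real rmorphB; ring.
Qed.

Definition interp_ub (M : R) := forall h, is_interpolant h -> q h <= M.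

Definition interp_lub (rho : R) := interp_ub rho /\ forall M, interp_ub M -> rho <= M.

Lemma interp_ub_ge0 M : interp_ub M -> 0 <= M.
Proof.
by have [h [ih _]] := exists_interpolant [::]; move=> /(_ h ih); apply/le_trans/qnorm_ge0.
Qed.

Lemma Fvals_ubP (M : R[i]) : (forall z, Fvals K x z -> z <= M) <->
  M = (complex.Re M)%:C /\ interp_ub (complex.Re M).
Proof.
split=> [ubM | [-> ubM] z /Fvals_interpolantP[h [ih ->]]]; last by rewrite lecR ubM.
have qM h : is_interpolant h -> (q h)%:C <= M.
  by move=> ih; apply: ubM; apply/Fvals_interpolantP; exists h.
have [h0 [ih0 _]] := exists_interpolant [::].
have /qM := ih0; rewrite lecE /= => /andP[/eqP Im0 _].
have re : M = (complex.Re M)%:C by case: M Im0 {qM ubM} => a b /= ->.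
by split=> // h /qM; rewrite {1}re lecR.
Qed.

Lemma is_lub_FvalsP r :
  is_lub (Fvals K x) r <-> r = (complex.Re r)%:C /\ interp_lub (complex.Re r).
Proof.
split=> [[/Fvals_ubP[re ubr] least] | [re [ubr least]]].
  split=> //; split=> // M ubM; rewrite -lecR -re.
  by apply: least; apply/Fvals_ubP.
split=> [|M /Fvals_ubP[-> /least le_rM]]; last by rewrite re lecR.
by apply/Fvals_ubP.
Qed.

Lemma interp_lub_exists M : interp_ub M -> exists rho, interp_lub rho.
Proof.
move=> ubM; pose S := (q @` is_interpolant)%classic.
have [h0 [ih0 _]] := exists_interpolant [::].
have S0 : (S !=set0)%classic by exists (q h0), h0.
have ubS : ubound S (sup S).
  by apply: sup_upper_bound; split=> //; exists M => _ [h /ubM ? <-].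
exists (sup S); split=> [h ih | M' ubM']; first by apply: ubS; exists h.
by apply: ge_sup => // _ [h /ubM' ? <-].
Qed.

Lemma interp_lub_adherent rho e : interp_lub rho -> 0 < e ->
  exists h, is_interpolant h /\ rho - e < q h.
Proof.
move=> [_ least] e0; apply: contrapT => /forallNP none.
suff : rho <= rho - e by lra.
by apply: least => h ih; rewrite leNgt; apply/negP => lt_h; apply: (none h).
Qed.

Definition pointwise_delta (u : nat -> comb R X) :=
  forall y, cvgC (fun n => ceval K (u n) y) (delta y).

Lemma cvgC_pair_delta u h :
  pointwise_delta u -> cvgC (fun n => cdot K h (u n)) (pair_delta h).
Proof.
move=> pu; under eq_fun do rewrite cdot_cevalr.
by apply: cvgC_sum => a; apply: cvgCZ.
Qed.

Lemma pointwise_interp_ub u C : pointwise_delta u ->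
  (exists N, forall n, (N <= n)%N -> q (u n) <= C) -> interp_ub C.
Proof.
move=> pu [N bN] h ih.
have C0 : 0 <= C by apply: le_trans (bN N (leqnn N)); apply: qnorm_ge0.
have lim_h := cvgC_pair_delta h pu.
rewrite -(cdot_interp (interpolant_interp ih)) cdot_real // in lim_h.
have : normc (q h)%:C <= Num.sqrt (q h * C).
  apply: (cvgC_normc_le lim_h); exists N => n /bN le_C.
  apply: (le_trans (normc_cdot_le pd _ _)); apply: ler_wsqrtr.
  by apply: ler_wpM2l; rewrite ?qnorm_ge0.
rewrite normc_real ger0_norm ?qnorm_ge0 // => le_sqrt.
apply: le_of_le_sqrt_eps => // e e0; apply: (le_trans le_sqrt).
apply: ler_wpDr; first exact: ltW.
by apply: ler_wsqrtr; rewrite ler_wpM2r // lerDl ltW.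
Qed.

Lemma cdot_near_pair_delta u : cauchy K u -> pointwise_delta u ->
  forall e, 0 < e -> exists N, forall n, (N <= n)%N ->
    normc (cdot K (u n) (u n) - pair_delta (u n)) < e.
Proof.
move=> cu pu e e0; have e2 : 0 < e / 2 by rewrite divr_gt0.
have [N0 bN] := cauchy_bounded pd cu; set C := 2 * q (u N0) + 2 in bN.
have C0 : 0 < C by rewrite /C ltr_wpDl ?mulr_ge0 ?qnorm_ge0.
have [N1 HN1] := cu _ (divr_gt0 (exprn_gt0 2 e2) C0).
exists (maxn N0 N1) => n; rewrite geq_max => /andP[n0 n1].
have [N2 HN2] := cvgC_pair_delta (u n) pu e2.
pose m := maxn N1 N2.
have -> : cdot K (u n) (u n) - pair_delta (u n) =
    cdot K (u n) (csub (u n) (u m)) + (cdot K (u n) (u m) - pair_delta (u n)).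
  by rewrite cdotBr; ring.
have lt1 : normc (cdot K (u n) (csub (u n) (u m))) < e / 2.
  apply: (le_lt_trans (normc_cdot_le pd _ _)).
  rewrite -[e / 2]ger0_norm ?ltW // -sqrtr_sqr ltr_sqrt ?exprn_gt0 //.
  apply: (le_lt_trans (y := C * q (csub (u n) (u m)))).
    by rewrite ler_wpM2r ?qnorm_ge0 ?bN.
  by rewrite mulrC -ltr_pdivlMr // HN1 // leq_maxl.
have lt2 := HN2 m (leq_maxr _ _).
by apply: (le_lt_trans (le_normcD _ _)); lra.
Qed.

Lemma norm_limit_interp_lub u rho : cauchy K u -> pointwise_delta u ->
  cvgR (fun n => q (u n)) rho -> interp_lub rho.
Proof.
move=> cu pu cv; split=> [h ih | M ubM].
  apply/ler_addgt0Pr => e /cv[N HN].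
  apply: (pointwise_interp_ub pu _ ih); exists N => n /HN.
  by rewrite ltr_norml => /andP[_]; lra.
apply: le_of_le_sqrt_eps (interp_ub_ge0 ubM) _ => e e0.
have e2 : 0 < e / 2 by rewrite divr_gt0.
have [[N1 HN1] [N2 HN2]] := (cv _ e2, cdot_near_pair_delta cu pu e2).
pose n := maxn N1 N2.
have [h [ih sub]] := exists_interpolant (points (u n)).
have pair_le : normc (pair_delta (u n)) <= Num.sqrt (q (u n) * M).
  rewrite -(cdot_interp (sub_in1 sub (interpolant_interp ih))).
  apply: (le_trans (normc_cdot_le pd _ _)); apply: ler_wsqrtr.
  by rewrite ler_wpM2l ?qnorm_ge0 ?ubM.
have q_le : q (u n) <= normc (pair_delta (u n)) + e / 2.
  rewrite -[q (u n)]ger0_norm ?qnorm_ge0 // -normc_real.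
  have -> : (q (u n))%:C = pair_delta (u n) + ((q (u n))%:C - pair_delta (u n)) by ring.
  apply: (le_trans (le_normcD _ _)); rewrite lerD2l -cdot_real //.
  exact/ltW/HN2/leq_maxr.
have := HN1 n (leq_maxl _ _); rewrite ltr_norml => /andP[lo hi].
have : Num.sqrt (q (u n) * M) <= Num.sqrt ((rho + e) * M).
  by apply: ler_wsqrtr; rewrite ler_wpM2r ?(interp_ub_ge0 ubM) //; lra.
lra.
Qed.

Lemma interp_delta_err rho h y : interp_ub rho -> is_interpolant h ->
  normc (ceval K h y - delta y) <= Num.sqrt ((rho - q h) * q [:: (y, 1)]).
Proof.
move=> ubr ih; have [k [ik sub]] := exists_interpolant (y :: points h).
have kh : interp_delta k (points h).
  by apply: sub_in1 (interpolant_interp ik) => p hp; apply: sub; rewrite inE hp orbT.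
have <- : ceval K k y = delta y by apply: (interpolant_interp ik); apply/sub/mem_head.
rewrite -ceval_csub; apply: (le_trans (normc_ceval_le pd _ _)).
apply/ler_wsqrtr/ler_wpM2r; first exact: qnorm_ge0.
by rewrite qnormBC // (qnormB_interp (interpolant_interp ih) kh) lerD2r ubr.
Qed.

Lemma nested_interpolants_approx (h : nat -> comb R X) rho : interp_ub rho ->
  (forall n, is_interpolant (h n)) ->
  (forall n m, (n <= m)%N -> interp_delta (h m) (points (h n))) ->
  cvgR (fun n => q (h n)) rho -> cauchy K h /\ pointwise_delta h.
Proof.
move=> ubr ih nested cv; split=> [e /cv[N HN] | y e e0].
  exists N => m n Nm Nn.
  wlog le_nm : m n Nm Nn / (n <= m)%N.
    move=> W; case: (leqP n m) => [|/ltnW] le; first exact: W.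
    by rewrite qnormBC //; apply: W.
  rewrite (qnormB_interp (interpolant_interp (ih n)) (nested n m le_nm)).
  by have := HN n Nn; have := ubr _ (ih m); rewrite ltr_norml => ? /andP[? ?]; lra.
pose c := q [:: (y, 1)]; have c0 : 0 < c + 1 by rewrite ltr_wpDl ?qnorm_ge0.
have [N HN] := cv _ (divr_gt0 (exprn_gt0 2 e0) c0).
exists N => n /HN; rewrite ltr_norml => /andP[lo _].
apply: (le_lt_trans (interp_delta_err y ubr (ih n))).
rewrite -[e]ger0_norm ?ltW // -sqrtr_sqr ltr_sqrt ?exprn_gt0 //.
apply: (le_lt_trans (y := e ^+ 2 / (c + 1) * c)).
  by apply: ler_wpM2r; [exact: qnorm_ge0 | lra].
by rewrite mulrAC ltr_pdivrMr // ltr_pM2l ?exprn_gt0 // ltrDl.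
Qed.

Lemma exists_nested_interpolants rho : interp_lub rho -> exists h : nat -> comb R X,
  [/\ forall n, is_interpolant (h n),
      forall n m, (n <= m)%N -> interp_delta (h m) (points (h n))
    & cvgR (fun n => q (h n)) rho].
Proof.
move=> lub.
have adh n : exists g, is_interpolant g /\ rho - n.+1%:R^-1 < q g.
  by apply: interp_lub_adherent lub _; rewrite invr_gt0.
have [g gP] := choice adh; have [cov covP] := choice exists_interpolant.
pose fix h n :=
  if n is m.+1 then cov (points (h m) ++ points (g n)) else cov (points (g 0)).
have ih n : is_interpolant (h n) by case: n => [|n]; apply: (covP _).1.
have sub_g n : {subset points (g n) <= points (h n)}.
  by case: n => [|n] p gp; apply: (covP _).2; rewrite // mem_cat gp orbT.
have sub_h : {homo h : n m / (n <= m)%N >-> {subset points n <= points m}}.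
  apply: (@homo_leq _ h (fun a b => {subset points a <= points b})).
  - by move=> a.
  - by move=> b a c ab bc p /ab/bc.
  move=> n p hp.
  by apply: (covP _).2; rewrite mem_cat hp.
have nested n m : (n <= m)%N -> interp_delta (h m) (points (h n)).
  by move=> /sub_h sub; exact: (sub_in1 sub (interpolant_interp (ih m))).
have q_lt n : rho - n.+1%:R^-1 < q (h n).
  apply: (lt_le_trans (gP n).2); rewrite -subr_ge0.
  rewrite -(qnormB_interp (interpolant_interp (gP n).1)) ?qnorm_ge0 //.
  exact: (sub_in1 (sub_g n) (interpolant_interp (ih n))).
exists h; split=> // e /invSn_lt_eventually[N HN]; exists N => n /HN lt_e.
rewrite ler0_norm ?subr_le0 ?(lub.1 _ (ih n)) // opprB; apply: (lt_trans _ lt_e).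
by rewrite ltrBlDr addrC -ltrBlDr q_lt.
Qed.

Lemma interp_lub_approx rho : interp_lub rho ->
  exists u, [/\ cauchy K u, pointwise_delta u & cvgR (fun n => q (u n)) rho].
Proof.
move=> lub; have [h [ih nested cv]] := exists_nested_interpolants lub.
by have [cu pu] := nested_interpolants_approx lub.1 ih nested cv; exists h.
Qed.

End DeltaInterpolation.

Theorem corollary8p7 (R : realType) (X : Type) (K : X -> X -> R[i]) (x : X) :
  posdef K ->
  (forall (n : nat) (f : 'I_n -> X), injective f -> KF K f \in unitmx) ->
  (in_RKHS K (delta R x) <->
     exists M : R[i], forall z, Fvals K x z -> z <= M) /\
  (forall r : R[i], RKHS_norm2 K (delta R x) r <-> is_lub (Fvals K x) r).
Proof.
(* Classically every type has decidable equality, which the point lists need. *)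
move: K x; change X with {classic X} => K x pd KF_unit.
split=> [|r]; split.
- move=> [u /(approximatesP pd)[cu pu]]; have [N bN] := cauchy_bounded pd cu.
  exists (2 * qnorm K (u N) + 2)%:C; apply/(Fvals_ubP x pd KF_unit); split=> //=.
  by apply: (pointwise_interp_ub pd KF_unit pu); exists N.
- move=> [M /(Fvals_ubP x pd KF_unit)[_ /interp_lub_exists[rho lub]]].
  have [u [cu pu _]] := interp_lub_approx pd KF_unit lub.
  by exists u; apply/approximatesP.
- move=> /(RKHS_norm2P pd)[u [/(approximatesP pd)[cu pu] re cv]].
  apply/(is_lub_FvalsP x pd KF_unit); split=> //.
  exact: norm_limit_interp_lub cu pu cv.
- move=> /(is_lub_FvalsP x pd KF_unit)[re lub].
  have [u [cu pu cv]] := interp_lub_approx pd KF_unit lub.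
  by apply/(RKHS_norm2P pd); exists u; split=> //; apply/approximatesP.
Qed.
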